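(* Let $L=\langle S,A,\to\rangle$ be a labelled transition system and $R\subseteq S\times S$. Then: $R$ is a weak bisimulation iff it is an $(o,o)$-generic bisimulation; $R$ is a delay bisimulation iff it is an $(o,b)$-generic bisimulation; $R$ is an $\eta$-bisimulation iff it is a $(b,o)$-generic bisimulation; $R$ is a branching bisimulation iff it is a $(b,b)$-generic bisimulation.
   Context: An LTS is $\langle S,A,\to\rangle$ with states $S$, actions $A$ containing the internal action $\tau$, and $\to\subseteq S\times A\times S$; write $s\xrightarrow{a}t$, and $\twoheadrightarrow$ for the reflexive-transitive closure of $\xrightarrow{\tau}$. All relations below are required to be symmetric, and the conditions are imposed whenever $s\,R\,t$ and $s\xrightarrow{a}s'$. Weak bisimulation: either $a=\tau$ and $s'\,R\,t$, or there exist $t',t_1,t_2$ with $t\twoheadrightarrow t_1\xrightarrow{a}t_2\twoheadrightarrow t'$ and $s'\,R\,t'$. Delay bisimulation: either $a=\tau$ and $s'\,R\,t$, or there exist $t',t_1$ with $t\twoheadrightarrow t_1\xrightarrow{a}t'$ and $s'\,R\,t'$. $\eta$-bisimulation: either $a=\tau$ and $s'\,R\,t$, or there exist $t',t_1,t_2$ with $t\twoheadrightarrow t_1\xrightarrow{a}t_2\twoheadrightarrow t'$, $s\,R\,t_1$ and $s'\,R\,t'$. Branching bisimulation: either $a=\tau$ and $s'\,R\,t$, or there exist $t',t_1$ with $t\twoheadrightarrow t_1\xrightarrow{a}t'$, $s\,R\,t_1$ and $s'\,R\,t'$. Generic: for $R\subseteq S\times S$ and $s,s',t$: $s\twoheadrightarrow_{o,R,t}s'$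 iff $s\twoheadrightarrow s'$; $s\twoheadrightarrow_{b,R,t}s'$ iff $s\twoheadrightarrow s'$, $t\,R\,s$ and $t\,R\,s'$. For $x,y\in\{o,b\}$, $R$ is an $(x,y)$-generic bisimulation if either $a=\tau$ and $s'\,R\,t$, or there exist $t',t_1,t_2$ with $t\twoheadrightarrow_{x,R,s}t_1\xrightarrow{a}t_2\twoheadrightarrow_{y,R,s'}t'$ and $s'\,R\,t'$. *)

From Stdlib Require Import Relations.

(* An LTS <S, A, ->> is given by a state type S, an action type A, a
   distinguished internal action tau : A, and a transition relation
   step : S -> A -> S -> Prop  (step s a t  means  s --a--> t). *)

Definition tau_steps {S A : Type} (step : S -> A -> S -> Prop) (tau : A)
  : relation S := clos_refl_trans S (fun x y => step x tau y).

Definition symmetric_rel {S : Type} (R : S -> S -> Prop) : Prop :=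
  forall s t, R s t -> R t s.

Definition weak_bisim {S A : Type} (step : S -> A -> S -> Prop) (tau : A)
  (R : S -> S -> Prop) : Prop :=
  symmetric_rel R /\
  forall s t a s', R s t -> step s a s' ->
    (a = tau /\ R s' t) \/
    exists t' t1 t2, tau_steps step tau t t1 /\ step t1 a t2 /\
                     tau_steps step tau t2 t' /\ R s' t'.

Definition delay_bisim {S A : Type} (step : S -> A -> S -> Prop) (tau : A)
  (R : S -> S -> Prop) : Prop :=
  symmetric_rel R /\
  forall s t a s', R s t -> step s a s' ->
    (a = tau /\ R s' t) \/
    exists t' t1, tau_steps step tau t t1 /\ step t1 a t' /\ R s' t'.

Definition eta_bisim {S A : Type} (step : S -> A -> S -> Prop) (tau : A)
  (R : S -> S -> Prop) : Prop :=
  symmetric_rel R /\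
  forall s t a s', R s t -> step s a s' ->
    (a = tau /\ R s' t) \/
    exists t' t1 t2, tau_steps step tau t t1 /\ step t1 a t2 /\
                     tau_steps step tau t2 t' /\ R s t1 /\ R s' t'.

Definition branching_bisim {S A : Type} (step : S -> A -> S -> Prop) (tau : A)
  (R : S -> S -> Prop) : Prop :=
  symmetric_rel R /\
  forall s t a s', R s t -> step s a s' ->
    (a = tau /\ R s' t) \/
    exists t' t1, tau_steps step tau t t1 /\ step t1 a t' /\
                  R s t1 /\ R s' t'.

Inductive gmode : Type := mo | mb.

(* gen_steps step tau x R t s s'  is  s ->>_{x,R,t} s' :
   o: s ->> s';   b: s ->> s', t R s and t R s'. *)
Definition gen_steps {S A : Type} (step : S -> A -> S -> Prop) (tau : A)
  (x : gmode) (R : S -> S -> Prop) (t s s' : S) : Prop :=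
  match x with
  | mo => tau_steps step tau s s'
  | mb => tau_steps step tau s s' /\ R t s /\ R t s'
  end.

Definition generic_bisim {S A : Type} (step : S -> A -> S -> Prop) (tau : A)
  (x y : gmode) (R : S -> S -> Prop) : Prop :=
  symmetric_rel R /\
  forall s t a s', R s t -> step s a s' ->
    (a = tau /\ R s' t) \/
    exists t' t1 t2, gen_steps step tau x R s t t1 /\ step t1 a t2 /\
                     gen_steps step tau y R s' t2 t' /\ R s' t'.

(** Each definition is the generic one with the corresponding modes, up to
    two observations.  A b-prefix [t ->>_{b,R,s} t1] only adds [s R t1],
    since [s R t] is already assumed.  A b-suffix
    [t2 ->>_{b,R,s'} t' /\ s' R t'] is equivalent to [s' R t2]: one direction
    is part of its definition, and for the other take [t' := t2]; so it turns
    the trailing [->>] of weak and eta bisimulation into the single final step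
    of delay and branching bisimulation. *)

From Stdlib Require Import Relations Setoid.

Section GenericBisim.

Variables (S A : Type) (step : S -> A -> S -> Prop) (tau : A) (R : S -> S -> Prop).

Lemma transfer_iff (P Q : S -> S -> A -> S -> Prop) :
  (forall s t a s', R s t -> P s t a s' <-> Q s t a s') ->
  (symmetric_rel R /\ forall s t a s', R s t -> step s a s' ->
     (a = tau /\ R s' t) \/ P s t a s') <->
  (symmetric_rel R /\ forall s t a s', R s t -> step s a s' ->
     (a = tau /\ R s' t) \/ Q s t a s').
Proof.
  intros HPQ.
  split; intros [Hsym Htransfer]; split; trivial;
    intros s t a s' Hst Hs;
    destruct (Htransfer s t a s' Hst Hs) as [Htau | Hmatch]; auto;
    right; apply (HPQ s t a s' Hst); exact Hmatch.
Qed.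

Lemma gen_steps_mb_prefix s t t1 :
  R s t ->
  gen_steps step tau mb R s t t1 <-> tau_steps step tau t t1 /\ R s t1.
Proof. intros Hst; simpl; tauto. Qed.

Lemma gen_steps_mb_suffix s' t2 :
  (exists t', gen_steps step tau mb R s' t2 t' /\ R s' t') <-> R s' t2.
Proof.
  simpl; split.
  - intros (t' & (_ & Hs't2 & _) & _); exact Hs't2.
  - intros Hs't2; exists t2; repeat split; trivial; apply rt_refl.
Qed.

Lemma weak_bisim_generic :
  weak_bisim step tau R <-> generic_bisim step tau mo mo R.
Proof. reflexivity. Qed.

Lemma delay_bisim_generic :
  delay_bisim step tau R <-> generic_bisim step tau mo mb R.
Proof.
  apply transfer_iff; intros s t a s' _; simpl; split.
  - intros (t2 & t1 & Ht1 & Hstep & Hs't2).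
    destruct (proj2 (gen_steps_mb_suffix s' t2) Hs't2) as (t' & Hsuffix & Hs't').
    exists t', t1, t2; auto.
  - intros (t' & t1 & t2 & Ht1 & Hstep & Hsuffix & Hs't').
    exists t2, t1; repeat split; trivial.
    apply (gen_steps_mb_suffix s' t2); exists t'; auto.
Qed.

Lemma eta_bisim_generic :
  eta_bisim step tau R <-> generic_bisim step tau mb mo R.
Proof.
  apply transfer_iff; intros s t a s' Hst.
  setoid_rewrite (gen_steps_mb_prefix s t _ Hst); simpl; firstorder.
Qed.

Lemma branching_bisim_generic :
  branching_bisim step tau R <-> generic_bisim step tau mb mb R.
Proof.
  apply transfer_iff; intros s t a s' Hst.
  setoid_rewrite (gen_steps_mb_prefix s t _ Hst); split.
  - intros (t2 & t1 & Ht1 & Hstep & Hst1 & Hs't2).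
    destruct (proj2 (gen_steps_mb_suffix s' t2) Hs't2) as (t' & Hsuffix & Hs't').
    exists t', t1, t2; auto.
  - intros (t' & t1 & t2 & Hprefix & Hstep & Hsuffix & Hs't').
    exists t2, t1; repeat split; try apply Hprefix; trivial.
    apply (gen_steps_mb_suffix s' t2); exists t'; auto.
Qed.

End GenericBisim.

Theorem proposition4p6 (S A : Type) (step : S -> A -> S -> Prop) (tau : A)
  (R : S -> S -> Prop) :
  (weak_bisim step tau R <-> generic_bisim step tau mo mo R) /\
  (delay_bisim step tau R <-> generic_bisim step tau mo mb R) /\
  (eta_bisim step tau R <-> generic_bisim step tau mb mo R) /\
  (branching_bisim step tau R <-> generic_bisim step tau mb mb R).
Proof.
  split; [| split; [| split]].
  - apply weak_bisim_generic.
  - apply delay_bisim_generic.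
  - apply eta_bisim_generic.
  - apply branching_bisim_generic.
Qed.
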